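(* Let $\mathcal M\subset{}^d\mathcal K$ be maximal isotropic. If $n_+(\mathcal M)=0$, then $\dim\ker\Delta(\mathcal M,\underline a)\leq n_0(\mathcal M)$.
   Context: Let $\mathcal G=(V,\mathcal I,\mathcal E,\partial)$ be a finite connected graph with internal edges $\mathcal I$ (intervals $I_i=[0,a_i]$, $a_i>0$) and external edges $\mathcal E$ (half-lines $I_e=[0,\infty)$). $\mathcal H=\bigoplus_jL^2(I_j)$; $\mathcal D$ = $\psi\in\mathcal H$ with $\psi_j,\psi_j'$ absolutely continuous, $\psi_j''\in L^2$. $\mathcal K=\mathbb C^{|\mathcal E|}\oplus\mathbb C^{|\mathcal I|}\oplus\mathbb C^{|\mathcal I|}$, ${}^d\mathcal K=\mathcal K\oplus\mathcal K$. For $\psi\in\mathcal D$: $\underline\psi=(\{\psi_e(0)\},\{\psi_i(0)\},\{\psi_i(a_i)\})$, $\underline\psi'=(\{\psi_e'(0)\},\{\psi_i'(0)\},\{-\psi_i'(a_i)\})$. Maximal isotropic subspaces of ${}^d\mathcal K$ are exactly $\mathcal M(A,B)=\{\chi_1\oplus\chi_2:A\chi_1+B\chi_2=0\}$ with $A,B$ linear on $\mathcal K$, $(A,B)$ of rank $|\mathcal E|+2|\mathcal I|$ and $AB^\dagger$ self-adjoint. $\Delta(\mathcal M,\underline a)$ is the self-adjoint operator $(\Delta\psi)_j=\psi_j''$ on $\{\psi\in\mathcal D:A\underline\psi+B\underline\psi'=0\}$. $n_+(\mathcal M)$, $n_0(\mathcal M)$ are the numbers of positive, resp. zero, eigenvalues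 (with multiplicity) of $AB^\dagger$, independent of the choice of $(A,B)$ with $\mathcal M=\mathcal M(A,B)$. *)

From HB Require Import structures.
From mathcomp Require Import all_boot all_order all_algebra.
From mathcomp Require Import all_classical all_reals all_analysis.
From mathcomp Require Import complex.
Set Implicit Arguments. Unset Strict Implicit. Unset Printing Implicit Defensive.
Import Order.TTheory GRing.Theory Num.Theory.
Local Open Scope classical_set_scope.
Local Open Scope ring_scope.

Section QuantumGraph.
Variable R : realType.

Notation mu := (@lebesgue_measure R).

(* External edges are indexed by 'I_nE, internal edges by 'I_nI.
   The boundary map: an external edge e is attached at the vertex endE e,
   an internal edge i has initial vertex (endI i).1 and terminal vertex (endI i).2. *)
Definition graph_connected (V : finType) (nI : nat) (endI : 'I_nI -> V * V) : Prop :=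
  forall v w : V,
    connect (fun x y => [exists i : 'I_nI, (endI i == (x, y)) || (endI i == (y, x))]) v w.

Definition edge (nE nI : nat) := ('I_nE + 'I_nI)%type.

Definition edge_interval (nE nI : nat) (a : 'I_nI -> R) (j : edge nE nI) : set R :=
  match j with
  | inl _ => `[0%R, +oo[%classic
  | inr i => `[0%R, a i]%classic
  end.

Definition L2on (I : set R) (f : R -> R) : Prop :=
  measurable_fun I f /\ mu.-integrable I (fun x => ((f x) ^+ 2)%:E).

(* u is absolutely continuous on I with (a.e.) derivative phi, phi is absolutely
   continuous on I with (a.e.) derivative chi, and u, chi are in L^2(I).
   (Absolute continuity is expressed through Lebesgue's characterization:
   u x = u 0 + \int_0^x phi with phi locally integrable.) *)
Definition H2data (I : set R) (u phi chi : R -> R) : Prop :=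
  [/\ forall x, I x -> mu.-integrable `[0%R, x] (EFin \o phi)
                       /\ mu.-integrable `[0%R, x] (EFin \o chi),
      forall x, I x -> u x = u 0 + Rintegral mu `[0%R, x] phi,
      forall x, I x -> phi x = phi 0 + Rintegral mu `[0%R, x] chi,
      L2on I u & L2on I chi].

Definition cH2data (I : set R) (u phi chi : R -> R[i]) : Prop :=
  H2data I (fun x => complex.Re (u x)) (fun x => complex.Re (phi x)) (fun x => complex.Re (chi x))
  /\ H2data I (fun x => complex.Im (u x)) (fun x => complex.Im (phi x)) (fun x => complex.Im (chi x)).

Section Boundary.
Variables (nE nI : nat) (a : 'I_nI -> R).

Definition bval (psi : edge nE nI -> R -> R[i]) : 'cV[R[i]]_(nE + nI + nI) :=
  col_mx (col_mx (\col_(e < nE) psi (inl e) 0) (\col_(i < nI) psi (inr i) 0))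
         (\col_(i < nI) psi (inr i) (a i)).

(* underline psi' : boundary derivatives (outward sign at a_i) *)
Definition bder (phi : edge nE nI -> R -> R[i]) : 'cV[R[i]]_(nE + nI + nI) :=
  col_mx (col_mx (\col_(e < nE) phi (inl e) 0) (\col_(i < nI) phi (inr i) 0))
         (\col_(i < nI) - phi (inr i) (a i)).

Definition in_kernel (A B : 'M[R[i]]_(nE + nI + nI)) (psi : edge nE nI -> R -> R[i]) : Prop :=
  exists phi chi : edge nE nI -> R -> R[i],
    [/\ forall j, cH2data (edge_interval a j) (psi j) (phi j) (chi j),
        A *m bval psi + B *m bder phi = 0
      & forall j, {ae mu, forall x, edge_interval a j x -> chi j x = 0}].

Definition lin_indep_H (m : nat) (Psi : 'I_m -> edge nE nI -> R -> R[i]) : Prop :=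
  forall c : 'I_m -> R[i],
    (forall j, {ae mu, forall x, edge_interval a j x -> \sum_(l < m) c l * Psi l j x = 0}) ->
    forall l, c l = 0.

Definition ker_dim_le (A B : 'M[R[i]]_(nE + nI + nI)) (k : nat) : Prop :=
  forall (m : nat) (Psi : 'I_m -> edge nE nI -> R -> R[i]),
    (forall l, in_kernel A B (Psi l)) -> lin_indep_H Psi -> (m <= k)%N.

End Boundary.

Definition adjmx (n : nat) (M : 'M[R[i]]_n) : 'M[R[i]]_n := map_mx Num.conj M^T.

Definition eigenvalues (n : nat) (M : 'M[R[i]]_n) : seq R[i] :=
  sval (closed_field_poly_normal (char_poly M)).

Definition n_plus (n : nat) (M : 'M[R[i]]_n) : nat := count (fun z => 0 < z) (eigenvalues M).
Definition n_zero (n : nat) (M : 'M[R[i]]_n) : nat := count (fun z => z == 0) (eigenvalues M).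

End QuantumGraph.

From HB Require Import structures.
From mathcomp Require Import all_boot all_order all_algebra.
From mathcomp Require Import all_classical all_reals all_analysis.
From mathcomp Require Import complex.
From mathcomp Require Import ring.
Set Implicit Arguments. Unset Strict Implicit. Unset Printing Implicit Defensive.
Import Order.TTheory GRing.Theory Num.Theory.
Local Open Scope ring_scope.

(* A function psi in the kernel has psi'' = 0, so it is affine on every edge,
   and square integrability forces it to vanish on the half-lines.  Its boundary
   data x = psi_, y = psi'_ satisfy A x + B y = 0; since (A, B) has full rank and
   A B^* is self-adjoint, this means x = B^* w and y = - A^* w for some w.
   Computing x^* y in two ways,
     - sum_i a_i |psi_i'|^2 = x^* y = - w^* A B^* w,
   the left side is <= 0 and, as A B^* has no positive eigenvalue, the right side
   is >= 0.  Both vanish, so w lies in the zero eigenspace of A B^*.  As psi is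
   determined by x = B^* w, independent kernel functions give independent
   vectors w in that eigenspace, whose dimension is n_0. *)

Lemma char_poly_similar (R : comUnitRingType) n (P A : 'M[R]_n) :
  P \in unitmx -> char_poly (invmx P *m A *m P) = char_poly A.
Proof.
move=> uP; rewrite /char_poly /char_poly_mx.
have PVP : map_mx polyC (invmx P) *m map_mx polyC P = 1%:M.
  by rewrite -map_mxM mulVmx // map_mx1.
have XE : ('X%:M : 'M[{poly R}]_n) = map_mx polyC (invmx P) *m 'X%:M *m map_mx polyC P.
  by rewrite -mulmxA -scalar_mxC mulmxA PVP mul1mx.
rewrite !map_mxM {1}XE -mulmxBl -mulmxBr !det_mulmx mulrC mulrA -det_mulmx.
by rewrite -map_mxM mulmxV // map_mx1 det1 mul1r.
Qed.

Lemma leq_card_indep_supported (F : fieldType) n m (Z : {pred 'I_n})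
    (v : 'I_m -> 'cV[F]_n) :
  (forall l i, i \notin Z -> v l i 0 = 0) ->
  (forall c : 'I_m -> F, \sum_l c l *: v l = 0 -> forall l, c l = 0) ->
  (m <= #|Z|)%N.
Proof.
move=> vZ v_indep.
pose W : 'M[F]_(m, #|Z|) := \matrix_(l, k) v l (enum_val k) 0.
have W_free : row_free W.
  apply: inj_row_free => r rW0; apply/rowP => l; rewrite mxE.
  apply: v_indep; apply/colP => i; rewrite summxE [RHS]mxE.
  have [Zi | nZi] := boolP (i \in Z); last first.
    by rewrite big1 // => l' _; rewrite mxE vZ ?mulr0.
  have := congr1 (fun u : 'rV_#|Z| => u 0 (enum_rank_in Zi i)) rW0.
  rewrite !mxE => rW0i; rewrite -[RHS]rW0i; apply: eq_bigr => l' _.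
  by rewrite !mxE enum_rankK_in.
by apply: leq_trans (rank_leq_col W); rewrite row_leq_rank.
Qed.

Section NonpositiveLagrangian.
Variable C : numClosedFieldType.
Local Open Scope sesquilinear_scope.

Lemma trmxC_mul m n p (X : 'M[C]_(m, n)) (Y : 'M[C]_(n, p)) :
  (X *m Y)^t* = Y^t* *m X^t*.
Proof. by rewrite trmx_mul map_mxM. Qed.

Lemma trmxC_mul_cV_entry n (u v : 'cV[C]_n) :
  (u^t* *m v) 0 0 = \sum_k (u k 0)^* * v k 0.
Proof. by rewrite mxE; apply: eq_bigr => k _; rewrite !mxE. Qed.

Lemma spectral_diag_perm_eq n (M : 'M[C]_n) (s : seq C) :
  M \is normalmx -> char_poly M = \prod_(z <- s) ('X - z%:P) ->
  perm_eq s [seq spectral_diag M 0 i | i <- enum 'I_n].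
Proof.
move=> /orthomx_spectralP eM cM; apply: prod_XsubC_eq.
rewrite -cM {1}eM char_poly_similar ?spectral_unit //.
rewrite char_poly_trig ?diag_mx_is_trig // big_map big_enum /=.
by apply: eq_bigr => i _; rewrite mxE eqxx mulr1n.
Qed.

Lemma diag_form_ge0_support n (d : 'rV[C]_n) (u : 'cV[C]_n) :
  (forall i, d 0 i <= 0) -> 0 <= (u^t* *m diag_mx d *m u) 0 0 ->
  forall i, d 0 i != 0 -> u i 0 = 0.
Proof.
move=> d_le0 form_ge0 i di_neq0.
have term_ge0 j : 0 <= - (d 0 j * (u j 0 * (u j 0)^*)).
  by rewrite oppr_ge0 mulr_le0_ge0 ?mul_conjC_ge0.
have formE : (u^t* *m diag_mx d *m u) 0 0 = \sum_j d 0 j * (u j 0 * (u j 0)^*).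
  by rewrite mxE; apply: eq_bigr => j _; rewrite mul_mx_diag !mxE mulrAC mulrC [_^* * _]mulrC.
have terms_eq0 : \sum_j - (d 0 j * (u j 0 * (u j 0)^*)) = 0.
  apply/eqP; rewrite eq_le sumr_ge0 ?andbT // sumrN oppr_le0 -formE //.
move: (psumr_eq0P (fun j _ => term_ge0 j) terms_eq0 (i := i) isT) => /eqP.
by rewrite oppr_eq0 mulf_eq0 (negPf di_neq0) mul_conjC_eq0 => /eqP.
Qed.

Lemma mxrank_trmxC m n (X : 'M[C]_(m, n)) : \rank (X^t*) = \rank X.
Proof. by rewrite mxrank_map mxrank_tr. Qed.

Lemma mxrank_row_mx_swap n p (A B : 'M[C]_(n, p)) :
  \rank (row_mx B (- A)) = \rank (row_mx A B).
Proof.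
have swap (X Y : 'M[C]_(n, p)) : row_mx Y (- X) = row_mx X Y *m block_mx 0 (- 1%:M) 1%:M 0.
  by rewrite mul_row_block !mulmx0 mulmxN !mulmx1 add0r addr0.
apply/eqP; rewrite eqn_leq {1}swap mxrankM_maxl /=.
by rewrite -mxrank_opp opp_row_mx (swap B (- A)) mxrankM_maxl.
Qed.

Lemma isotropic_pair_param n (A B : 'M[C]_n) (x y : 'cV[C]_n) :
  \rank (row_mx A B) = n -> (A *m B^t*)^t* = A *m B^t* ->
  A *m x + B *m y = 0 -> exists w : 'cV[C]_n, x = B^t* *m w /\ y = - (A^t* *m w).
Proof.
move=> rkAB herm Axy0.
pose K := (row_mx A B)^T; pose Y := col_mx (B^t*) (- A^t*).
have sub_ker p (X : 'M[C]_(n + n, p)) : row_mx A B *m X = 0 -> (X^T <= kermx K)%MS.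
  by move=> ABX0; apply/sub_kermxP; rewrite -trmx_mul ABX0 trmx0.
have xy_ker : ((col_mx x y)^T <= kermx K)%MS by rewrite sub_ker // mul_row_col.
have Y_ker : (Y^T <= kermx K)%MS.
  rewrite sub_ker // mul_row_col mulmxN -[B *m _]trmxCK trmxC_mul trmxCK herm.
  exact: subrr.
have rkY : \rank Y^T = n.
  have -> : Y = (row_mx B (- A))^t*.
    by rewrite tr_row_mx map_col_mx raddfN /= map_mxN.
  by rewrite mxrank_tr mxrank_trmxC mxrank_row_mx_swap.
have rkK : \rank (kermx K) = n by rewrite mxrank_ker mxrank_tr rkAB addnK.
have /submxP [D xyD] : ((col_mx x y)^T <= Y^T)%MS.
  by apply: submx_trans xy_ker _; rewrite -(mxrank_leqif_sup Y_ker).2 rkY rkK.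
exists D^T; move/(congr1 trmx): xyD; rewrite trmx_mul !trmxK mul_col_mx.
by move=> /eq_col_mx [-> ->]; rewrite mulNmx.
Qed.

Lemma nonpos_lagrangian_indep_le n m (A B : 'M[C]_n) (s : seq C)
    (x y : 'I_m -> 'cV[C]_n) :
  \rank (row_mx A B) = n -> (A *m B^t*)^t* = A *m B^t* ->
  char_poly (A *m B^t*) = \prod_(z <- s) ('X - z%:P) ->
  count (fun z : C => (0 < z)%R) s = 0%N ->
  (forall l, A *m x l + B *m y l = 0) ->
  (forall l, (x l ^t* *m y l) 0 0 <= 0) ->
  (forall c : 'I_m -> C, \sum_l c l *: x l = 0 -> forall l, c l = 0) ->
  (m <= count (fun z : C => z == 0%R) s)%N.
Proof.
set M := A *m B^t* => rkAB herm charM no_pos xy_sol xy_le0 x_indep.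
have M_herm : M \is hermsymmx by apply/is_hermitianmxP; rewrite expr0 scale1r herm.
set P := spectralmx M; set d := spectral_diag M.
have P_unitary : P \is unitarymx := spectral_unitarymx M.
have ME : M = P^t* *m diag_mx d *m P.
  by rewrite -invmx_unitary //; apply/orthomx_spectralP/hermitian_normalmx.
have s_perm := spectral_diag_perm_eq (hermitian_normalmx M_herm) charM.
have d_le0 i : d 0 i <= 0.
  have d_real : d 0 i \is Num.real := mxOverP (hermitian_spectral_diag_real M_herm) 0 i.
  rewrite real_leNgt //; apply/negP => di_gt0.
  suff : (0 < count (fun z : C => (0 < z)%R) s)%N by rewrite no_pos.
  rewrite -has_count (perm_has _ s_perm); apply/hasP; exists (d 0 i) => //.
  by apply: map_f; rewrite mem_enum.
have [w xyw] := fin_all_exists (fun l => isotropic_pair_param rkAB herm (xy_sol l)).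
have -> : count (fun z : C => z == 0%R) s = #|[pred i | d 0 i == 0]|.
  by rewrite (permP s_perm) count_map enumT cardE /enum_mem size_filter.
apply: (leq_card_indep_supported (v := fun l => P *m w l)) => [l i | c sum0].
  rewrite inE => /(diag_form_ge0_support d_le0); apply.
  have formE : x l ^t* *m y l = - ((P *m w l)^t* *m diag_mx d *m (P *m w l)).
    rewrite (xyw l).1 (xyw l).2 mulmxN !trmxC_mul trmxCK !mulmxA.
    by rewrite -(mulmxA _ B) -[B *m _]trmxCK trmxC_mul trmxCK herm ME !mulmxA.
  by move: (xy_le0 l); rewrite formE mxE oppr_le0.
apply: x_indep.
have -> : \sum_l c l *: x l = B^t* *m P^t* *m \sum_l c l *: (P *m w l).
  rewrite mulmx_sumr; apply: eq_bigr => l _.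
  by rewrite -scalemxAr mulmxA mulmxKtV // (xyw l).1.
by rewrite sum0 mulmx0.
Qed.

End NonpositiveLagrangian.

Section AffineSolutions.
Local Open Scope classical_set_scope.
Variable R : realType.
Local Notation mu := (@lebesgue_measure R).

Lemma H2data_affine (I : set R) (u phi chi : R -> R) :
  I `<=` `[0, +oo[ -> (forall x, I x -> `[0, x] `<=` I) ->
  H2data I u phi chi -> {ae mu, forall x, I x -> chi x = 0} ->
  forall x, I x -> phi x = phi 0 /\ u x = u 0 + phi 0 * x.
Proof.
move=> I_ge0 I_sub [integ uE phiE _ _] chi0.
have phi_cst x : I x -> phi x = phi 0.
  move=> Ix; rewrite phiE // /Rintegral (ae_eq_integral (cst 0%E)) ?integral0 ?addr0 //.
  - exact: measurable_funS (measurable_int _ (integ x Ix).2).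
  - apply: filterS chi0; first exact: (ae_filter_ringOfSetsType mu).
    by move=> y chi0y /(I_sub x Ix) Iy; rewrite /= chi0y.
move=> x Ix; split; first exact: phi_cst.
rewrite uE // (@eq_Rintegral _ _ _ _ _ (cst (phi 0))); last first.
  by move=> y /set_mem /(I_sub x Ix); exact: phi_cst.
rewrite Rintegral_cst //; have /= -> := lebesgue_measure_itv `[0, x]%R.
have := I_ge0 x Ix; rewrite /= in_itv /= andbT le_eqVlt => /predU1P[<-|x_gt0].
  by rewrite ltxx /= mulr0.
by rewrite lte_fin x_gt0 /= subr0 mulrC.
Qed.

Lemma sqr_ge_not_integrable (f : R -> R) (N eps : R) : 0 <= N -> 0 < eps ->
  (forall x, N <= x -> eps <= f x ^+ 2) ->
  ~ mu.-integrable `[0, +oo[ (fun x => (f x ^+ 2)%:E).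
Proof.
move=> N_ge0 eps_gt0 f_ge f_int.
have /integrableP [f_meas] : mu.-integrable `[N, +oo[ (fun x => (f x ^+ 2)%:E).
  by apply: integrableS f_int => // y /=; rewrite !in_itv /= !andbT; exact: le_trans.
apply/negP; rewrite -leNgt.
under eq_integral => x _ do rewrite gee0_abs ?lee_fin ?sqr_ge0 //.
apply: (@le_trans _ _ (\int[mu]_(x in `[N, +oo[) (cst eps%:E) x)%E).
  rewrite integral_cst //; have /= -> := lebesgue_measure_itv `[N, +oo[%R.
  by rewrite ltry addye // gt0_muley ?lte_fin.
apply: ge0_le_integral => //= [x _|x]; first by rewrite lee_fin ltW.
by rewrite in_itv /= andbT => Nx; rewrite lee_fin f_ge.
Qed.

Lemma L2on_halfline_affine_eq0 (f : R -> R) (u0 c : R) : L2on `[0, +oo[ f ->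
  (forall x, 0 <= x -> f x = u0 + c * x) -> u0 = 0 /\ c = 0.
Proof.
move=> [_ f_int] fE; have [c0 | c_neq0] := eqVneq c 0.
  split => //; apply/eqP/negPn/negP => u0_neq0.
  apply: (sqr_ge_not_integrable (N := 0) (eps := u0 ^+ 2) _ _ _ f_int) => //.
    by rewrite exprn_even_gt0 // u0_neq0.
  by move=> x x_ge0; rewrite fE // c0 mul0r addr0.
have N_ge0 : 0 <= (`|u0| + 1) / `|c| by rewrite divr_ge0 // addr_ge0.
exfalso; apply: (sqr_ge_not_integrable N_ge0 ltr01 _ f_int) => x Nx.
have x_ge0 : 0 <= x := le_trans N_ge0 Nx.
have : 1 <= `|f x|.
  rewrite fE // addrC; apply: le_trans (lerB_normD _ _).
  by rewrite normrM (ger0_norm x_ge0) lerBrDr addrC mulrC -ler_pdivrMr ?normr_gt0.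
by move=> /(exprn_ege1 2); rewrite real_normK ?num_real.
Qed.

Lemma H2data_halfline_eq0 (u phi chi : R -> R) :
  H2data `[0, +oo[ u phi chi -> {ae mu, forall x, `[0, +oo[ x -> chi x = 0} ->
  forall x, 0 <= x -> u x = 0.
Proof.
move=> uH chi0.
have sub_halfline (x : R) : `[0, +oo[ x -> `[0, x] `<=` `[0, +oo[.
  by move=> _ y /=; rewrite !in_itv /= andbT => /andP[].
have uE x : 0 <= x -> u x = u 0 + phi 0 * x.
  move=> x_ge0; have Ix : (`[0, +oo[ : set R) x by rewrite /= in_itv /= x_ge0.
  by have [] := H2data_affine (fun _ => id) sub_halfline uH chi0 Ix.
case: uH => _ _ _ uL2 _; move=> x /uE ->.
by have [-> ->] := L2on_halfline_affine_eq0 uL2 uE; rewrite mul0r addr0.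
Qed.

Local Open Scope complex_scope.

Lemma ae_eq0_ReIm (I : set R) (chi : R -> R[i]) :
  {ae mu, forall x, I x -> chi x = 0} ->
  {ae mu, forall x, I x -> complex.Re (chi x) = 0} /\
  {ae mu, forall x, I x -> complex.Im (chi x) = 0}.
Proof.
move=> chi0; split; apply: filterS chi0; try exact: (ae_filter_ringOfSetsType mu);
  by move=> x chi0x /chi0x ->.
Qed.

Lemma cH2data_affine (I : set R) (psi phi chi : R -> R[i]) :
  I `<=` `[0, +oo[ -> (forall x, I x -> `[0, x] `<=` I) ->
  cH2data I psi phi chi -> {ae mu, forall x, I x -> chi x = 0} ->
  forall x, I x -> phi x = phi 0 /\ psi x = psi 0 + phi 0 * x%:C.
Proof.
move=> I_ge0 I_sub [ReH ImH] /ae_eq0_ReIm [Re_chi0 Im_chi0] x Ix.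
have [Re_phi Re_psi] := H2data_affine I_ge0 I_sub ReH Re_chi0 Ix.
have [Im_phi Im_psi] := H2data_affine I_ge0 I_sub ImH Im_chi0 Ix.
move: Re_phi Im_phi Re_psi Im_psi.
case: (phi x) (phi 0) (psi x) (psi 0) => [p1 p2] [q1 q2] [r1 r2] [s1 s2] /= -> -> -> ->.
by split; apply/eqP; rewrite eq_complex /= ?mulr0 ?subr0 ?mul0r ?add0r !eqxx.
Qed.

Lemma cH2data_halfline_eq0 (psi phi chi : R -> R[i]) :
  cH2data `[0, +oo[ psi phi chi -> {ae mu, forall x, `[0, +oo[ x -> chi x = 0} ->
  forall x, 0 <= x -> psi x = 0.
Proof.
move=> [ReH ImH] /ae_eq0_ReIm [Re_chi0 Im_chi0] x x_ge0.
apply/eqP; rewrite eq_complex (H2data_halfline_eq0 ReH Re_chi0 x_ge0).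
by rewrite (H2data_halfline_eq0 ImH Im_chi0 x_ge0) !eqxx.
Qed.

End AffineSolutions.

Section LaplacianKernel.
Variables (R : realType) (nE nI : nat) (a : 'I_nI -> R).
Hypothesis a_gt0 : forall i, 0 < a i.
Local Open Scope classical_set_scope.
Local Open Scope complex_scope.
Local Open Scope sesquilinear_scope.
Implicit Types psi phi : edge nE nI -> R -> R[i].

Definition edgewise_affine psi phi : Prop :=
  [/\ forall e x, 0 <= x -> psi (inl e) x = 0,
      forall i, phi (inr i) (a i) = phi (inr i) 0 &
      forall i x, 0 <= x <= a i -> psi (inr i) x = psi (inr i) 0 + phi (inr i) 0 * x%:C].

Lemma in_kernel_edgewise_affine A B psi : in_kernel a A B psi ->
  exists phi, A *m bval a psi + B *m bder a phi = 0 /\ edgewise_affine psi phi.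
Proof.
case=> phi [chi [psiH bc chi0]]; exists phi; split => //.
have int_ge0 i : `[0, a i] `<=` `[0, +oo[.
  by move=> x /=; rewrite !in_itv /= andbT => /andP[].
have int_sub i x : `[0, a i] x -> `[0, x] `<=` `[0, a i].
  move=> /=; rewrite in_itv /= => /andP[_ xa] y /=; rewrite !in_itv /= => /andP[-> yx].
  exact: le_trans yx xa.
have affine i x : 0 <= x <= a i ->
    phi (inr i) x = phi (inr i) 0 /\ psi (inr i) x = psi (inr i) 0 + phi (inr i) 0 * x%:C.
  move=> Ix; apply: (cH2data_affine (int_ge0 i) (int_sub i) (psiH (inr i)) (chi0 (inr i))).
  by rewrite /= in_itv.
split=> [e|i|i x /affine []//].
  exact: cH2data_halfline_eq0 (psiH (inl e)) (chi0 (inl e)).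
by have [] := affine i (a i); rewrite ?lexx ?ltW ?a_gt0.
Qed.

Lemma bval_ext psi e : bval a psi (lshift nI (lshift nI e)) 0 = psi (inl e) 0.
Proof. by rewrite /bval !col_mxEu mxE. Qed.

Lemma bval_int0 psi i : bval a psi (lshift nI (rshift nE i)) 0 = psi (inr i) 0.
Proof. by rewrite /bval col_mxEu col_mxEd mxE. Qed.

Lemma bval_inta psi i : bval a psi (rshift (nE + nI) i) 0 = psi (inr i) (a i).
Proof. by rewrite /bval col_mxEd mxE. Qed.

Lemma bder_int0 phi i : bder a phi (lshift nI (rshift nE i)) 0 = phi (inr i) 0.
Proof. by rewrite /bder col_mxEu col_mxEd mxE. Qed.

Lemma bder_inta phi i : bder a phi (rshift (nE + nI) i) 0 = - phi (inr i) (a i).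
Proof. by rewrite /bder col_mxEd mxE. Qed.

Lemma bval_bder_form_le0 psi phi : edgewise_affine psi phi ->
  (bval a psi ^t* *m bder a phi) 0 0 <= 0.
Proof.
move=> [psi_ext phi_cst psi_int].
rewrite trmxC_mul_cV_entry !big_split_ord /= big1 ?add0r => [|e _]; last first.
  by rewrite bval_ext psi_ext // conjC0 mul0r.
rewrite -big_split /= -oppr_ge0 -sumrN; apply: sumr_ge0 => i _.
have ai_ge0 : 0 <= a i := ltW (a_gt0 i).
rewrite bval_int0 bval_inta bder_int0 bder_inta phi_cst (psi_int i (a i)) ?lexx ?ai_ge0 //.
set al := psi (inr i) 0; set be := phi (inr i) 0.
have -> : - ((al)^* * be + (al + be * (a i)%:C)^* * - be) = (a i)%:C * (be * be^* ).
  by rewrite rmorphD rmorphM /= (conj_Creal (x := (a i)%:C)) ?ger0_real ?ler0c //; ring.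
by rewrite mulr_ge0 ?ler0c ?mul_conjC_ge0.
Qed.

Lemma bval_lin_indep m (Psi Phi : 'I_m -> edge nE nI -> R -> R[i]) :
  (forall l, edgewise_affine (Psi l) (Phi l)) -> lin_indep_H a Psi ->
  forall c : 'I_m -> R[i], \sum_l c l *: bval a (Psi l) = 0 -> forall l, c l = 0.
Proof.
move=> Psi_aff Psi_indep c bval0; apply: Psi_indep => j; apply: aeW => x.
have bval0_at k : \sum_l c l * bval a (Psi l) k 0 = 0.
  have /matrixP /(_ k 0) := bval0; rewrite summxE [RHS]mxE => bval0k.
  by apply: etrans bval0k; apply: eq_bigr => l _; rewrite [RHS]mxE.
have sumE i y : 0 <= y <= a i -> \sum_l c l * Psi l (inr i) y =
    \sum_l c l * Psi l (inr i) 0 + (\sum_l c l * Phi l (inr i) 0) * y%:C.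
  move=> Iy; rewrite mulr_suml -big_split; apply: eq_bigr => l _.
  by have [_ _ ->] := Psi_aff l; rewrite // mulrDr mulrA.
case: j => [e | i] /=; rewrite in_itv /= ?andbT => Ix.
  by rewrite big1 // => l _; have [-> // _ _] := Psi_aff l; rewrite mulr0.
have start0 : \sum_l c l * Psi l (inr i) 0 = 0.
  by under eq_bigr do rewrite -bval_int0; exact: bval0_at.
have slope0 : \sum_l c l * Phi l (inr i) 0 = 0.
  have := bval0_at (rshift (nE + nI) i); under eq_bigr do rewrite bval_inta.
  rewrite sumE ?lexx ?ltW ?a_gt0 // start0 add0r => /eqP.
  have ai_gt0 : (0 : R[i]) < (a i)%:C by rewrite ltcE /= eqxx a_gt0.
  by rewrite mulf_eq0 (gt_eqF ai_gt0) orbF => /eqP.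
by rewrite sumE // start0 slope0 mul0r addr0.
Qed.

End LaplacianKernel.

Lemma char_poly_eigenvalues (R : realType) n (M : 'M[R[i]]_n) :
  char_poly M = \prod_(z <- eigenvalues M) ('X - z%:P).
Proof.
rewrite /eigenvalues; case: closed_field_poly_normal => s /= {1}->.
by rewrite (monicP (char_poly_monic M)) scale1r.
Qed.

Theorem proposition3p9 (R : realType) (V : finType) (nE nI : nat)
    (endE : 'I_nE -> V) (endI : 'I_nI -> V * V) (a : 'I_nI -> R)
    (A B : 'M[R[i]]_(nE + nI + nI)) :
  graph_connected endI ->
  (forall i, 0 < a i) ->
  \rank (row_mx A B) = (nE + nI + nI)%N ->
  adjmx (A *m adjmx B) = A *m adjmx B ->
  n_plus (A *m adjmx B) = 0%N ->
  ker_dim_le a A B (n_zero (A *m adjmx B)).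
Proof.
move=> _ a_gt0 rkAB herm no_pos m Psi Psi_ker Psi_indep.
have [Phi Psi_sol] := fin_all_exists (fun l => in_kernel_edgewise_affine a_gt0 (Psi_ker l)).
apply: (nonpos_lagrangian_indep_le rkAB herm (char_poly_eigenvalues _) no_pos
          (x := fun l => bval a (Psi l)) (y := fun l => bder a (Phi l))).
- by move=> l; case: (Psi_sol l).
- by move=> l; exact: (bval_bder_form_le0 a_gt0 (proj2 (Psi_sol l))).
- exact: (bval_lin_indep a_gt0 (fun l => proj2 (Psi_sol l)) Psi_indep).
Qed.
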